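(* Let $r\in(0,1]$ be small enough that $\bigcup_{v\in V_r}\Theta^{\rm out}_r(v)\subset\Lambda_r$. Then on the event $\mathcal A_{r,1}$, for every $x\in\Theta^{\rm in}_r(0)\cap\mathcal O$, $$\#W_r(x)\ge r^{-d\{(d-1)/4-2\epsilon\}}.$$
   Context: Frog model setting: $d\ge2$, $r\in(0,1]$, $\omega$ i.i.d. Bernoulli($r$) on $\mathbb{Z}^d$, independent simple random walks $(S^x_k)_{k\ge0}$ with $S^x_0=x$, independent of $\omega$; $\mathcal O:=\{x:\omega(x)=1\}$. $\tau(x,y):=\inf\{k\ge0:S^x_k=y\}$ if $\omega(x)=1$, $:=\infty$ otherwise. For $A\subset\mathbb{Z}^d$, $T_A(x,y):=\inf\{\sum_{i=0}^{m-1}\tau(x_i,x_{i+1}): m\in\mathbb{N},\ x_0,\dots,x_{m-1}\in A,\ x_m\in\mathbb{Z}^d,\ x_0=x,\ x_m=y\}$. Fix $\epsilon:=1/(12d)$. $B_\infty(z,R):=\{y\in\mathbb{R}^d:\|y-z\|_\infty\le R\}$. For $v\in\mathbb{Z}^d$, with $c_r:=7\lceil r^{-(1/2+\epsilon)}\rceil$: $\Theta^{\rm in}_r(v):=B_\infty(c_rv,r^{-(1/2+\epsilon)})\cap\mathbb{Z}^d$, $\Theta_r(v):=B_\infty(c_rv,2r^{-(1/2+\epsilon)})\cap\mathbb{Z}^d$, $\Theta^{\rm out}_r(v):=(B_\infty(c_rv,3r^{-(1/2+\epsilon)})\cap\mathbb{Z}^d)\setminus\Theta_r(v)$. $u\overset{*}{\sim}v$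 means $\|u-v\|_\infty=1$. $\mathcal S_r(v)$ is the event that $\Theta^{\rm in}_r(v)\cap\mathcal O\neq\emptyset$ and for every $x\in\Theta^{\rm in}_r(v)\cap\mathcal O$: (i) for every $u\overset{*}{\sim}v$ there is $a\in\Theta^{\rm in}_r(u)\cap\mathcal O$ with $T_{\Theta_r(v)}(x,a)\le r^{-(1+3\epsilon)}$; (ii) there is $b\in\Theta^{\rm out}_r(v)\cap\mathcal O$ with $T_{\Theta_r(v)}(x,b)\le r^{-(1+3\epsilon)}$. $\Lambda_r:=B_\infty(0,r^{-(d+1)/4})\cap\mathbb{Z}^d$, $V_r:=B_\infty(0,r^{-(d-1)/4+2\epsilon})\cap\mathbb{Z}^d$, $\mathcal A_{r,1}:=\bigcap_{v\in V_r}\mathcal S_r(v)$. For $x\in\Theta^{\rm in}_r(0)$, $W_r(x):=\{w\in\bigcup_{v\in V_r}\Theta^{\rm out}_r(v): T_{\bigcup_{v\in V_r}\Theta_r(v)}(x,w)\le2r^{-(d+1)/2}\}\cap\mathcal O$. *)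

From Stdlib Require Import Reals Lra Lia ZArith List.
From Stdlib Require Vectors.Fin.
Open Scope R_scope.

Definition pt (d : nat) := Fin.t d -> Z.

(* Configuration: omega : occupation (Bernoulli) variables,
   S x k : position of the walk started at x after k steps. *)

Definition nn_paths {d} (S : pt d -> nat -> pt d) : Prop :=
  forall x, S x 0%nat = x /\
  forall k, exists i, (Z.abs (S x (Datatypes.S k) i - S x k i) = 1)%Z /\
                forall j, j <> i -> S x (Datatypes.S k) j = S x k j.

Definition eps (d : nat) : R := 1 / (12 * INR d).

Definition Zceil_R (x : R) : Z := (- Int_part (- x))%Z.

Definition rho (d : nat) (r : R) : R := Rpower r (- (1/2 + eps d)).

Definition c_r (d : nat) (r : R) : R := 7 * IZR (Zceil_R (rho d r)).

Definition in_box {d} (r a : R) (v x : pt d) : Prop :=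
  forall i, Rabs (IZR (x i) - c_r d r * IZR (v i)) <= a.

Definition Theta_in {d} (r : R) (v x : pt d) : Prop := in_box r (rho d r) v x.
Definition Theta {d} (r : R) (v x : pt d) : Prop := in_box r (2 * rho d r) v x.
Definition Theta_out {d} (r : R) (v x : pt d) : Prop :=
  in_box r (3 * rho d r) v x /\ ~ Theta r v x.

Definition star_adj {d} (u v : pt d) : Prop :=
  (forall i, (Z.abs (u i - v i) <= 1)%Z) /\ exists i, Z.abs (u i - v i) = 1%Z.

Definition tau_is {d} (omega : pt d -> bool) (S : pt d -> nat -> pt d)
  (x y : pt d) (k : nat) : Prop :=
  omega x = true /\ S x k = y /\ forall j, (j < k)%nat -> S x j <> y.

Fixpoint nsum (f : nat -> nat) (m : nat) : nat :=
  match m with O => O | Datatypes.S m' => (nsum f m' + f m')%nat end.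

(* T_A(x,y) <= t.  Since tau is N u {oo}-valued, the infimum defining T_A is
   attained (when finite), so T_A(x,y) <= t iff some admissible chain has
   total time <= t. *)
Definition T_le {d} (omega : pt d -> bool) (S : pt d -> nat -> pt d)
  (A : pt d -> Prop) (x y : pt d) (t : R) : Prop :=
  exists (m : nat) (xs : nat -> pt d) (ks : nat -> nat),
    xs 0%nat = x /\ xs m = y /\
    (forall i, (i < m)%nat -> A (xs i) /\ tau_is omega S (xs i) (xs (Datatypes.S i)) (ks i)) /\
    INR (nsum ks m) <= t.

Definition Lambda {d} (r : R) (x : pt d) : Prop :=
  forall i, Rabs (IZR (x i)) <= Rpower r (- ((INR d + 1) / 4)).

Definition V_r {d} (r : R) (v : pt d) : Prop :=
  forall i, Rabs (IZR (v i)) <= Rpower r (- ((INR d - 1) / 4) + 2 * eps d).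

Definition S_event {d} (omega : pt d -> bool) (S : pt d -> nat -> pt d)
  (r : R) (v : pt d) : Prop :=
  (exists x, Theta_in r v x /\ omega x = true) /\
  forall x, Theta_in r v x -> omega x = true ->
    (forall u, star_adj u v ->
       exists a, Theta_in r u a /\ omega a = true /\
         T_le omega S (Theta r v) x a (Rpower r (- (1 + 3 * eps d)))) /\
    (exists b, Theta_out r v b /\ omega b = true /\
         T_le omega S (Theta r v) x b (Rpower r (- (1 + 3 * eps d)))).

Definition A_r1 {d} (omega : pt d -> bool) (S : pt d -> nat -> pt d) (r : R) : Prop :=
  forall v : pt d, V_r r v -> S_event omega S r v.

Definition W_r {d} (omega : pt d -> bool) (S : pt d -> nat -> pt d)
  (r : R) (x w : pt d) : Prop :=
  (exists v, V_r r v /\ Theta_out r v w) /\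
  T_le omega S (fun y => exists v, V_r r v /\ Theta r v y) x w
       (2 * Rpower r (- ((INR d + 1) / 2))) /\
  omega w = true.

Definition origin (d : nat) : pt d := fun _ => 0%Z.

From Stdlib Require Import Reals List.
From Stdlib Require Import Lra Lia ZArith Classical FunctionalExtensionality.
From Stdlib Require Vectors.Fin.
Open Scope R_scope.

(** Starting from x, the event S_r(v) lets the infection move in
    time r^{-(1+3eps)} from an occupied site of Θ^in(v) to an occupied site of
    Θ^in(u) for any *-neighbour u of v, so walking coordinatewise towards v it
    reaches Θ^in(v) for every v ∈ V_r with ||v||_∞ ≤ N := ⌊r^{-(d-1)/4+2eps}⌋
    within N r^{-(1+3eps)}, and then one more crossing reaches an occupied site
    of Θ^out(v).  The total time is at most 2 r^{-(d+1)/2}, the shells Θ^out(v)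
    are pairwise disjoint because c_r ≥ 7 r^{-(1/2+eps)}, and there are
    (2N+1)^d ≥ r^{-d((d-1)/4-2eps)} such v. *)

Lemma Rpower_le_antitone (r a b : R) :
  0 < r <= 1 -> a <= b -> Rpower r b <= Rpower r a.
Proof.
  intros hr hab.
  assert (inv_pow : forall c, Rpower r c = Rpower (/ r) (- c)).
  { intro c; unfold Rpower; rewrite ln_Rinv by lra; f_equal; ring. }
  rewrite !inv_pow; apply Rle_Rpower; [|lra].
  rewrite <- Rinv_1; apply Rinv_le_contravar; lra.
Qed.

Lemma Rpower_ge_1 (r a : R) : 0 < r <= 1 -> a <= 0 -> 1 <= Rpower r a.
Proof.
  intros hr ha; rewrite <- (Rpower_O r) at 1 by lra.
  exact (Rpower_le_antitone r a 0 hr ha).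
Qed.

Lemma nat_floor_spec (x : R) : 0 <= x -> exists N : nat, INR N <= x < INR N + 1.
Proof.
  intro hx; destruct (base_Int_part x) as [hlo hhi].
  assert (hpos : (0 <= Int_part x)%Z).
  { assert (hgt : (-1 < Int_part x)%Z) by (apply lt_IZR; lra); lia. }
  exists (Z.to_nat (Int_part x)).
  rewrite INR_IZR_INZ, Z2Nat.id by exact hpos; lra.
Qed.

Lemma eps_le (d : nat) : (2 <= d)%nat -> eps d <= 1 / 24.
Proof.
  intro hd; assert (h2 : 2 <= INR d) by (apply (le_INR 2) in hd; simpl in hd; lra).
  unfold eps, Rdiv; rewrite !Rmult_1_l; apply Rinv_le_contravar; lra.
Qed.

Definition V_radius (d : nat) (r : R) : R := Rpower r (- ((INR d - 1) / 4) + 2 * eps d).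

Lemma V_radius_pow (d : nat) (r : R) :
  V_radius d r ^ d = Rpower r (- (INR d * ((INR d - 1) / 4 - 2 * eps d))).
Proof.
  unfold V_radius; rewrite <- Rpower_pow, Rpower_mult by apply exp_pos.
  f_equal; ring.
Qed.

Section Exponents.

Variables (d : nat) (r : R).
Hypotheses (hd : (2 <= d)%nat) (hr : 0 < r <= 1).

Lemma INR_dim_ge_2 : 2 <= INR d.
Proof. apply (le_INR 2) in hd; simpl in hd; lra. Qed.

Lemma V_radius_ge_1 : 1 <= V_radius d r.
Proof.
  pose proof INR_dim_ge_2; pose proof (eps_le d hd); apply Rpower_ge_1; lra.
Qed.

Lemma crossing_time_budget (N : nat) : INR N <= V_radius d r ->
  (INR N + 1) * Rpower r (- (1 + 3 * eps d)) <= 2 * Rpower r (- ((INR d + 1) / 2)).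
Proof.
  intro hN; pose proof V_radius_ge_1 as hR1; pose proof INR_dim_ge_2.
  (* The exponent inequality (d+3)/4 + eps <= (d+1)/2 needs only eps <= (d-1)/4;
     the factor 2 absorbs the last crossing since V_radius >= 1. *)
  assert (hRT : V_radius d r * Rpower r (- (1 + 3 * eps d)) <= Rpower r (- ((INR d + 1) / 2))).
  { pose proof (eps_le d hd); unfold V_radius; rewrite <- Rpower_plus.
    apply Rpower_le_antitone; lra. }
  assert (0 < Rpower r (- (1 + 3 * eps d))) by apply exp_pos.
  nra.
Qed.

End Exponents.

Lemma box_in_V_r (d : nat) (r : R) (N : nat) (v : pt d) :
  INR N <= V_radius d r -> (forall i, (Z.abs (v i) <= Z.of_nat N)%Z) -> V_r r v.
Proof.
  intros hN hvN i; rewrite Rabs_Zabs.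
  specialize (hvN i); apply IZR_le in hvN; rewrite <- INR_IZR_INZ in hvN.
  fold (V_radius d r); lra.
Qed.

Lemma nsum_ext (f g : nat -> nat) (m : nat) :
  (forall i, (i < m)%nat -> f i = g i) -> nsum f m = nsum g m.
Proof.
  induction m as [|m IH]; simpl; intro hfg; [reflexivity|].
  rewrite IH, hfg; [reflexivity|lia|intros i hi; apply hfg; lia].
Qed.

Lemma nsum_add (f : nat -> nat) (a b : nat) :
  nsum f (a + b) = (nsum f a + nsum (fun i => f (a + i)%nat) b)%nat.
Proof.
  induction b as [|b IH]; simpl.
  - rewrite Nat.add_0_r; lia.
  - rewrite Nat.add_succ_r; simpl; rewrite IH; lia.
Qed.

Section Chains.

Context {d : nat} {omega : pt d -> bool} {S : pt d -> nat -> pt d}.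

Lemma T_le_refl (A : pt d -> Prop) (x : pt d) (t : R) :
  0 <= t -> T_le omega S A x x t.
Proof.
  intro ht; exists O, (fun _ => x), (fun _ => O); simpl.
  split; [reflexivity|split; [reflexivity|split; [intros i hi; lia|lra]]].
Qed.

Lemma T_le_weaken (A : pt d -> Prop) (x y : pt d) (t t' : R) :
  T_le omega S A x y t -> t <= t' -> T_le omega S A x y t'.
Proof.
  intros [m [xs [ks [h0 [hm [hsteps ht]]]]]] htt'.
  exists m, xs, ks; do 3 (split; [assumption|]); lra.
Qed.

Lemma T_le_subset (A B : pt d -> Prop) (x y : pt d) (t : R) :
  (forall p, A p -> B p) -> T_le omega S A x y t -> T_le omega S B x y t.
Proof.
  intros hAB [m [xs [ks [h0 [hm [hsteps ht]]]]]].
  exists m, xs, ks; do 2 (split; [assumption|]); split; [|assumption].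
  intros i hi; destruct (hsteps i hi); split; auto.
Qed.

Lemma T_le_trans (A : pt d -> Prop) (x y z : pt d) (t1 t2 : R) :
  T_le omega S A x y t1 -> T_le omega S A y z t2 -> T_le omega S A x z (t1 + t2).
Proof.
  intros [m1 [xs1 [ks1 [h10 [h1m [h1s h1t]]]]]] [m2 [xs2 [ks2 [h20 [h2m [h2s h2t]]]]]].
  set (xs := fun i => if Nat.leb i m1 then xs1 i else xs2 (i - m1)%nat).
  assert (xs_hi : forall i, (m1 <= i)%nat -> xs i = xs2 (i - m1)%nat).
  { intros i hi; unfold xs; destruct (Nat.leb_spec i m1); [|reflexivity].
    replace i with m1 by lia; rewrite Nat.sub_diag; congruence. }
  exists (m1 + m2)%nat, xs, (fun i => if Nat.ltb i m1 then ks1 i else ks2 (i - m1)%nat).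
  split; [|split; [|split]].
  - exact h10.
  - rewrite xs_hi by lia; replace (m1 + m2 - m1)%nat with m2 by lia; exact h2m.
  - intros i hi; destruct (Nat.ltb_spec i m1).
    + unfold xs; destruct (Nat.leb_spec i m1), (Nat.leb_spec (Datatypes.S i) m1); try lia.
      apply h1s; assumption.
    + rewrite !xs_hi by lia.
      replace (Datatypes.S i - m1)%nat with (Datatypes.S (i - m1)) by lia.
      apply h2s; lia.
  - rewrite nsum_add, plus_INR.
    rewrite (nsum_ext _ ks1 m1) by (intros i hi; destruct (Nat.ltb_spec i m1); [reflexivity|lia]).
    rewrite (nsum_ext _ ks2 m2); [lra|].
    intros i hi; destruct (Nat.ltb_spec (m1 + i) m1); [lia|]; f_equal; lia.
Qed.

End Chains.

Lemma c_r_ge (d : nat) (r : R) : 7 * rho d r <= c_r d r.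
Proof.
  unfold c_r, Zceil_R; rewrite opp_IZR.
  destruct (base_Int_part (- rho d r)); lra.
Qed.

Lemma in_box_disjoint (d : nat) (r a : R) (v v' w : pt d) :
  2 * a < c_r d r -> in_box r a v w -> in_box r a v' w -> v = v'.
Proof.
  intros hac hv hv'; apply functional_extensionality; intro i.
  destruct (Z.eq_dec (v i) (v' i)) as [|hne]; [assumption|exfalso].
  assert (hgap : 1 <= Rabs (IZR (v i) - IZR (v' i))).
  { rewrite <- minus_IZR, Rabs_Zabs; apply IZR_le; lia. }
  specialize (hv i); specialize (hv' i).
  assert (hc : 0 < c_r d r) by (pose proof (Rabs_pos (IZR (w i) - c_r d r * IZR (v i))); lra).
  assert (hdist : Rabs (c_r d r * IZR (v i) - c_r d r * IZR (v' i)) <= 2 * a).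
  { replace (c_r d r * IZR (v i) - c_r d r * IZR (v' i))
      with (- (IZR (w i) - c_r d r * IZR (v i)) + (IZR (w i) - c_r d r * IZR (v' i))) by ring.
    eapply Rle_trans; [apply Rabs_triang|]; rewrite Rabs_Ropp; lra. }
  rewrite <- Rmult_minus_distr_l, Rabs_mult, (Rabs_pos_eq (c_r d r)) in hdist by lra.
  nra.
Qed.

Lemma Theta_out_disjoint (d : nat) (r : R) (v v' w : pt d) :
  Theta_out r v w -> Theta_out r v' w -> v = v'.
Proof.
  intros [hv _] [hv' _]; apply (in_box_disjoint d r (3 * rho d r) v v' w); auto.
  pose proof (c_r_ge d r); assert (0 < rho d r) by apply exp_pos.
  lra.
Qed.

Lemma V_r_antimono (d : nat) (r : R) (u v : pt d) :
  (forall i, (Z.abs (u i) <= Z.abs (v i))%Z) -> V_r r v -> V_r r u.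
Proof.
  intros huv hv i; eapply Rle_trans; [|apply (hv i)].
  rewrite !Rabs_Zabs; apply IZR_le, huv.
Qed.

Definition Theta_union {d} (r : R) (y : pt d) : Prop :=
  exists v, V_r r v /\ Theta r v y.

Section Spreading.

Variables (d : nat) (r : R) (omega : pt d -> bool) (S : pt d -> nat -> pt d).
Hypothesis hA : A_r1 omega S r.
Variable x : pt d.
Hypotheses (hx : Theta_in r (origin d) x) (hox : omega x = true).

Local Notation T := (Rpower r (- (1 + 3 * eps d))).

Definition step_to_origin (v : pt d) : pt d := fun i => (v i - Z.sgn (v i))%Z.

Lemma reach_Theta_in (n : nat) (v : pt d) :
  V_r r v -> (forall i, (Z.abs (v i) <= Z.of_nat n)%Z) ->
  exists a, Theta_in r v a /\ omega a = true /\
            T_le omega S (Theta_union r) x a (INR n * T).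
Proof.
  revert v; induction n as [|n IH]; intros v hv hvn.
  - exists x; split; [|split; [exact hox|apply T_le_refl; simpl (INR 0); lra]].
    intro i; replace (v i) with 0%Z by (specialize (hvn i); lia).
    exact (hx i).
  - set (v' := step_to_origin v).
    assert (hv' : V_r r v').
    { apply (V_r_antimono d r v' v); [intro i; unfold v', step_to_origin; lia|exact hv]. }
    assert (hv'n : forall i, (Z.abs (v' i) <= Z.of_nat n)%Z).
    { intro i; specialize (hvn i); unfold v', step_to_origin; lia. }
    destruct (IH v' hv' hv'n) as [a' [ha'in [ha'o ha'T]]].
    assert (hT : 0 < T) by apply exp_pos.
    rewrite S_INR, Rmult_plus_distr_r, Rmult_1_l.
    destruct (classic (exists i, v i <> 0%Z)) as [[i0 hi0]|hzero].
    + assert (hadj : star_adj v v').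
      { split; [intro i|exists i0]; unfold v', step_to_origin; lia. }
      destruct (proj2 (hA v' hv') a' ha'in ha'o) as [hcross _].
      destruct (hcross v hadj) as [a [hain [hao haT]]].
      exists a; split; [exact hain|split; [exact hao|]].
      apply T_le_trans with (y := a'); [exact ha'T|].
      apply T_le_subset with (A := Theta r v'); [|exact haT].
      intros p hp; exists v'; auto.
    + assert (hfix : v' = v).
      { apply functional_extensionality; intro i; unfold v', step_to_origin.
        destruct (Z.eq_dec (v i) 0); [lia|exfalso; eauto]. }
      rewrite hfix in ha'in; exists a'; split; [exact ha'in|split; [exact ha'o|]].
      eapply T_le_weaken; [exact ha'T|lra].
Qed.

Lemma reach_Theta_out (N : nat) (v : pt d) :
  V_r r v -> (forall i, (Z.abs (v i) <= Z.of_nat N)%Z) ->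
  exists b, Theta_out r v b /\ omega b = true /\
            T_le omega S (Theta_union r) x b ((INR N + 1) * T).
Proof.
  intros hv hvN.
  destruct (reach_Theta_in N v hv hvN) as [a [hain [hao haT]]].
  destruct (proj2 (hA v hv) a hain hao) as [_ [b [hbout [hbo hbT]]]].
  exists b; split; [exact hbout|split; [exact hbo|]].
  rewrite Rmult_plus_distr_r, Rmult_1_l.
  apply T_le_trans with (y := a); [exact haT|].
  apply T_le_subset with (A := Theta r v); [|exact hbT].
  intros p hp; exists v; auto.
Qed.

End Spreading.

Definition pcons {d} (z : Z) (f : pt d) : pt (Datatypes.S d) :=
  fun i => Fin.caseS' i (fun _ => Z) z f.

Definition zrange (N : nat) : list Z :=
  map (fun k => (Z.of_nat k - Z.of_nat N)%Z) (seq 0 (2 * N + 1)).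

Fixpoint box_enum (N d : nat) : list (pt d) :=
  match d with
  | O => (fun _ => 0%Z) :: nil
  | Datatypes.S d' => flat_map (fun z => map (@pcons d' z) (box_enum N d')) (zrange N)
  end.

Lemma length_flat_map_const {A B} (g : A -> list B) (l : list A) (c : nat) :
  (forall a, length (g a) = c) -> length (flat_map g l) = (length l * c)%nat.
Proof.
  intro hg; induction l as [|a l IH]; simpl; [reflexivity|].
  rewrite length_app, IH, hg; lia.
Qed.

Lemma box_enum_length (N d : nat) : length (box_enum N d) = Nat.pow (2 * N + 1) d.
Proof.
  induction d as [|d IH]; simpl; [reflexivity|].
  rewrite (length_flat_map_const _ _ (Nat.pow (2 * N + 1) d)).
  - unfold zrange; rewrite length_map, length_seq; f_equal; lia.
  - intro z; rewrite length_map; exact IH.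
Qed.

Lemma box_enum_bound (N d : nat) (v : pt d) :
  In v (box_enum N d) -> forall i, (Z.abs (v i) <= Z.of_nat N)%Z.
Proof.
  revert v; induction d as [|d IH]; intros v hv i; [inversion i|].
  simpl in hv; apply in_flat_map in hv as [z [hz hv]].
  apply in_map_iff in hv as [f [<- hf]].
  apply (Fin.caseS' i (fun i => (Z.abs (pcons z f i) <= Z.of_nat N)%Z)); simpl.
  - unfold zrange in hz; apply in_map_iff in hz as [k [<- hk]].
    apply in_seq in hk; lia.
  - intro p; apply IH, hf.
Qed.

Lemma NoDup_flat_map_inj {A B} (g : A -> list B) (l : list A) :
  NoDup l -> (forall a, NoDup (g a)) ->
  (forall a a' b, In b (g a) -> In b (g a') -> a = a') -> NoDup (flat_map g l).
Proof.
  intros hl hg hinj; induction hl as [|a l hal hl IH]; simpl; [constructor|].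
  apply NoDup_app; auto.
  intros b hb hb'; apply in_flat_map in hb' as [a' [ha' hb']].
  rewrite (hinj _ _ _ hb hb') in hal; contradiction.
Qed.

Lemma box_enum_NoDup (N d : nat) : NoDup (box_enum N d).
Proof.
  induction d as [|d IH]; simpl.
  - constructor; [simpl; tauto|constructor].
  - apply NoDup_flat_map_inj.
    + unfold zrange; apply NoDup_map_NoDup_ForallPairs; [|apply seq_NoDup].
      intros a b _ _ h; lia.
    + intro z; apply NoDup_map_NoDup_ForallPairs; [|exact IH].
      intros f g _ _ h; apply functional_extensionality; intro i.
      exact (f_equal (fun F => F (Fin.FS i)) h).
    + intros a a' b h1 h2; apply in_map_iff in h1 as [f [<- _]], h2 as [g [h _]].
      symmetry; exact (f_equal (fun F => F Fin.F1) h).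
Qed.

Lemma choose_injective {A B} (Q : A -> B -> Prop) (l : list A) :
  NoDup l -> (forall a, In a l -> exists b, Q a b) ->
  (forall a a' b, Q a b -> Q a' b -> a = a') ->
  exists l' : list B, NoDup l' /\ length l' = length l /\
                      forall b, In b l' -> exists a, In a l /\ Q a b.
Proof.
  intros hl hex hinj; induction hl as [|a l hal hl IH].
  - exists nil; repeat split; [constructor|simpl; tauto].
  - destruct (hex a (or_introl eq_refl)) as [b hb].
    destruct IH as [l' [hl' [hlen hl'Q]]]; [intros; apply hex; right; assumption|].
    exists (b :: l'); repeat split; simpl.
    + constructor; [|exact hl'].
      intro hbl'; destruct (hl'Q b hbl') as [a' [ha' hQ]].
      rewrite (hinj _ _ _ hb hQ) in hal; contradiction.
    + f_equal; exact hlen.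
    + intros b' [<-|hb']; [exists a; auto|].
      destruct (hl'Q b' hb') as [a' [ha' hQ]]; eauto.
Qed.

Theorem lemma3p7 (d : nat) (r : R) (omega : pt d -> bool) (S : pt d -> nat -> pt d) :
  (2 <= d)%nat -> 0 < r <= 1 ->
  (forall v y : pt d, V_r r v -> Theta_out r v y -> Lambda r y) ->
  nn_paths S ->
  A_r1 omega S r ->
  forall x : pt d, Theta_in r (origin d) x -> omega x = true ->
    exists l : list (pt d),
      NoDup l /\ (forall w, In w l -> W_r omega S r x w) /\
      INR (length l) >= Rpower r (- (INR d * ((INR d - 1) / 4 - 2 * eps d))).
Proof.
  intros hd hr _ _ hA x hx hox.
  pose proof (V_radius_ge_1 d r hd hr) as hR1.
  destruct (nat_floor_spec (V_radius d r)) as [N [hNlo hNhi]]; [lra|].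
  assert (hW : forall v, In v (box_enum N d) ->
            exists w, Theta_out r v w /\ W_r omega S r x w).
  { intros v hv; pose proof (box_enum_bound N d v hv) as hvN.
    pose proof (box_in_V_r d r N v hNlo hvN) as hVv.
    destruct (reach_Theta_out d r omega S hA x hx hox N v hVv hvN) as [b [hbout [hbo hbT]]].
    exists b; split; [exact hbout|split; [exists v; auto|split; [|exact hbo]]].
    exact (T_le_weaken _ _ _ _ _ hbT (crossing_time_budget d r hd hr N hNlo)). }
  destruct (choose_injective _ _ (box_enum_NoDup N d) hW) as [ws [hws [hlen hwsW]]].
  { intros v v' w [hv _] [hv' _]; exact (Theta_out_disjoint d r v v' w hv hv'). }
  exists ws; split; [exact hws|split].
  - intros w hw; destruct (hwsW w hw) as [v [_ [_ hWw]]]; exact hWw.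
  - rewrite hlen, box_enum_length, pow_INR, <- V_radius_pow.
    apply Rle_ge, pow_incr; rewrite plus_INR, mult_INR; simpl (INR 1); simpl (INR 2); lra.
Qed.
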